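(* Let $A=A_s+A_d\epsilon\in\mathbb{DC}^{m\times n}$ and let $A=U\Sigma V^*$ be a singular value decomposition of $A$, where $U\in\mathbb{DC}^{m\times m}$ and $V\in\mathbb{DC}^{n\times n}$ are unitary dual complex matrices and $$\Sigma=\begin{bmatrix}\Sigma_{1s}&O\\O&O\end{bmatrix}+\begin{bmatrix}\Sigma_{1d}&O\\O&\Sigma_{2d}\end{bmatrix}\epsilon\in\mathbb{D}^{m\times n},$$ with $\Sigma_1=\Sigma_{1s}+\Sigma_{1d}\epsilon=\mathrm{diag}(\mu_1,\dots,\mu_r)$, $\mu_1\ge\dots\ge\mu_r$ positive appreciable dual real numbers, and $\Sigma_{2d}\epsilon=\mathrm{diag}(\mu_{r+1},\dots,\mu_t,0,\dots,0)$ with $\mu_{r+1}\ge\dots\ge\mu_t$ positive infinitesimal dual real numbers, $r\le t\le\min\{m,n\}$. Define $$\Sigma^G=\begin{bmatrix}\Sigma_1^{-1}&O\\O&O\end{bmatrix}=\begin{bmatrix}\Sigma_{1s}^{-1}&O\\O&O\end{bmatrix}-\begin{bmatrix}\Sigma_{1s}^{-2}\Sigma_{1d}&O\\O&O\end{bmatrix}\epsilon\in\mathbb{D}^{n\times m},\qquad A^G=V\Sigma^G U^*.$$ Then $X=A^G$ satisfies the four conditions (1e) $AXA=A_e$, (2) $XAX=X$, (3) $(AX)^*=AX$, (4) $(XA)^*=XA$, and it is the unique $X\in\mathbb{DC}^{n\times m}$ satisfying these four conditions. Moreover, if $A_d=O$ (i.e. $A$ is a complex matrix), then $A^G=A_s^+$,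 the Moore–Penrose inverse of $A_s$.
   Context: A dual number is $a=a_s+a_d\epsilon$ where $\epsilon\neq0$, $\epsilon^2=0$, and $\epsilon$ commutes with real/complex numbers; it is a dual real (resp. dual complex) number if $a_s,a_d$ are real (resp. complex). It is appreciable if $a_s\neq0$ and infinitesimal otherwise. Dual reals are totally ordered by: $a>b$ iff $a_s>b_s$, or $a_s=b_s$ and $a_d>b_d$. For appreciable $\mu$, $\mu^{-1}=\mu_s^{-1}-\mu_s^{-2}\mu_d\epsilon$. A dual complex matrix is $A=A_s+A_d\epsilon$ with $A_s,A_d$ complex matrices; $A^*=A_s^*+A_d^*\epsilon$; $U$ is unitary if $U^*U=UU^*=I$. Every $A\in\mathbb{DC}^{m\times n}$ has a singular value decomposition $A=U\Sigma V^*$ as in the statement, and the diagonal entries $\mu_1,\dots,\mu_t$ (with multiplicities) are unique. The essential part of $A$ is $A_e=U\begin{bmatrix}\Sigma_1&O\\O&O\end{bmatrix}V^*$ (with $\Sigma_1=\mathrm{diag}(\mu_1,\dots,\mu_r)$ the appreciable singular values); it is well-defined independent of the chosen SVD. A matrix $X$ satisfying (1e),(2),(3),(4) is called the genuine Moore–Penrose inverse (GMPI) of $A$, denoted $A^G$. *)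

From HB Require Import structures.
From mathcomp Require Import all_boot all_order all_algebra.
Set Implicit Arguments. Unset Strict Implicit. Unset Printing Implicit Defensive.
Import Order.TTheory GRing.Theory Num.Theory.
Local Open Scope ring_scope.

(* The complex field is modelled by an arbitrary numClosedFieldType C
   (e.g. algC, or R[i] for a real closed / real field R). *)

Definition ctr (C : numClosedFieldType) m n (A : 'M[C]_(m, n)) : 'M[C]_(n, m) :=
  map_mx Num.conj (trmx A).

(* A dual complex matrix A = A_s + A_d eps is the pair (A_s, A_d). *)
Definition dmx (C : numClosedFieldType) m n := ('M[C]_(m, n) * 'M[C]_(m, n))%type.

Definition dmul (C : numClosedFieldType) m n p (A : dmx C m n) (B : dmx C n p)
  : dmx C m p := (A.1 *m B.1, A.1 *m B.2 + A.2 *m B.1).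

Definition dstar (C : numClosedFieldType) m n (A : dmx C m n) : dmx C n m :=
  (ctr A.1, ctr A.2).

Definition did (C : numClosedFieldType) n : dmx C n n := (1%:M, 0).

Definition dunitary (C : numClosedFieldType) n (U : dmx C n n) : Prop :=
  dmul (dstar U) U = did C n /\ dmul U (dstar U) = did C n.

Definition dreal (C : numClosedFieldType) (a : C * C) : Prop :=
  a.1 \is Num.real /\ a.2 \is Num.real.
Definition dle (C : numClosedFieldType) (a b : C * C) : Prop :=
  a.1 < b.1 \/ (a.1 = b.1 /\ a.2 <= b.2).

(* mu : nat -> C * C lists the dual singular values mu_1 .. mu_t (index 0-based). *)
Definition is_svd_data (C : numClosedFieldType) m n (r t : nat) (mu : nat -> C * C)
  : Prop :=
  [/\ (r <= t <= minn m n)%N,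
      (forall i, (i < r)%N -> dreal (mu i) /\ 0 < (mu i).1),
      (forall i, (r <= i)%N -> (i < t)%N -> (mu i).1 = 0 /\ (mu i).2 \is Num.real /\ 0 < (mu i).2),
      (forall i, (i.+1 < r)%N -> dle (mu i.+1) (mu i))
    & (forall i, (r <= i)%N -> (i.+1 < t)%N -> dle (mu i.+1) (mu i))].

Definition Sigma (C : numClosedFieldType) m n (r t : nat) (mu : nat -> C * C)
  : dmx C m n :=
  (\matrix_(i < m, j < n) if ((i : nat) == j) && (i < r)%N then (mu i).1 else 0,
   \matrix_(i < m, j < n) if ((i : nat) == j) && (i < t)%N then (mu i).2 else 0).

Definition Sigma_e (C : numClosedFieldType) m n (r : nat) (mu : nat -> C * C)
  : dmx C m n :=
  (\matrix_(i < m, j < n) if ((i : nat) == j) && (i < r)%N then (mu i).1 else 0,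
   \matrix_(i < m, j < n) if ((i : nat) == j) && (i < r)%N then (mu i).2 else 0).

Definition SigmaG (C : numClosedFieldType) m n (r : nat) (mu : nat -> C * C)
  : dmx C n m :=
  (\matrix_(i < n, j < m) if ((i : nat) == j) && (i < r)%N then ((mu i).1)^-1 else 0,
   \matrix_(i < n, j < m) if ((i : nat) == j) && (i < r)%N
                          then - (((mu i).1)^-2 * (mu i).2) else 0).

Definition essential (C : numClosedFieldType) m n (U : dmx C m m) (V : dmx C n n)
  (r : nat) (mu : nat -> C * C) : dmx C m n :=
  dmul (dmul U (Sigma_e m n r mu)) (dstar V).

Definition AG (C : numClosedFieldType) m n (U : dmx C m m) (V : dmx C n n)
  (r : nat) (mu : nat -> C * C) : dmx C n m :=
  dmul (dmul V (SigmaG m n r mu)) (dstar U).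

Definition gmpi_conds (C : numClosedFieldType) m n (A Ae : dmx C m n) (X : dmx C n m)
  : Prop :=
  [/\ dmul (dmul A X) A = Ae,
      dmul (dmul X A) X = X,
      dstar (dmul A X) = dmul A X
    & dstar (dmul X A) = dmul X A].

(* The Penrose conditions for a complex matrix: X = A^+ iff these hold
   (the Moore-Penrose inverse is the unique such X). *)
Definition is_MP (C : numClosedFieldType) m n (A : 'M[C]_(m, n)) (X : 'M[C]_(n, m))
  : Prop :=
  [/\ A *m X *m A = A, X *m A *m X = X,
      ctr (A *m X) = A *m X & ctr (X *m A) = X *m A].

From HB Require Import structures.
From mathcomp Require Import all_boot all_order all_algebra.
Set Implicit Arguments. Unset Strict Implicit. Unset Printing Implicit Defensive.
Import Order.TTheory GRing.Theory Num.Theory.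
From mathcomp Require Import ring.
Local Open Scope ring_scope.

(* The four
   conditions (1e),(2),(3),(4) are invariant under a unitary change of
   coordinates: if X satisfies them for (A, A_e), then V X U^* satisfies them
   for (U A V^*, U A_e V^* ).  Existence and uniqueness of A^G therefore reduce
   to the diagonal case A = Sigma, A_e = Sigma_e, X = Sigma^G.
   For Sigma the conditions split into the Penrose conditions on the standard
   parts and linear conditions on the infinitesimal parts.  Existence is an
   entrywise computation on diagonal matrices.  Uniqueness of the standard
   part is the uniqueness of the Moore-Penrose inverse; the infinitesimal part
   W is then forced to be -G D G by a first-order analogue of that argument.
   Finally, if A_d = 0 then the infinitesimal part of U^* A V has the form
   S P + Q S with S its standard part; on the diagonal this kills every
   infinitesimal singular value, so A_e = A.  The conditions for (A, A) then
   contain the Penrose conditions for A_s, and (A_s^+, 0) is a solution, so by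
   uniqueness (A^G)_d = 0. *)

Section ConjugateTranspose.
Variable C : numClosedFieldType.

Lemma ctrM m n p (A : 'M[C]_(m, n)) (B : 'M[C]_(n, p)) :
  ctr (A *m B) = ctr B *m ctr A.
Proof. by rewrite /ctr trmx_mul map_mxM. Qed.

Lemma ctrD m n (A B : 'M[C]_(m, n)) : ctr (A + B) = ctr A + ctr B.
Proof. by rewrite /ctr linearD /= map_mxD. Qed.

Lemma ctrK m n (A : 'M[C]_(m, n)) : ctr (ctr A) = A.
Proof. by apply/matrixP=> i j; rewrite !mxE conjCK. Qed.

Lemma ctr0 m n : ctr (0 : 'M[C]_(m, n)) = 0.
Proof. by apply/matrixP=> i j; rewrite !mxE conjC0. Qed.

End ConjugateTranspose.

Section DualMatrices.
Variable C : numClosedFieldType.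

Lemma dmulA m n p q (A : dmx C m n) (B : dmx C n p) (D : dmx C p q) :
  dmul (dmul A B) D = dmul A (dmul B D).
Proof.
case: A B D => [A1 A2] [B1 B2] [D1 D2]; rewrite /dmul /=.
by congr pair; rewrite ?mulmxA // !mulmxDl !mulmxDr !mulmxA addrA.
Qed.

Lemma dmul1l m n (A : dmx C m n) : dmul (did C m) A = A.
Proof. by case: A => a b; rewrite /dmul /= !mul1mx mul0mx addr0. Qed.

Lemma dmul1r m n (A : dmx C m n) : dmul A (did C n) = A.
Proof. by case: A => a b; rewrite /dmul /= !mulmx1 mulmx0 add0r. Qed.

Lemma dstarM m n p (A : dmx C m n) (B : dmx C n p) :
  dstar (dmul A B) = dmul (dstar B) (dstar A).
Proof. by rewrite /dstar /dmul /= !ctrM ctrD !ctrM addrC. Qed.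

Lemma dstarK m n (A : dmx C m n) : dstar (dstar A) = A.
Proof. by case: A => a b; rewrite /dstar /= !ctrK. Qed.

Lemma dunitary_star n (U : dmx C n n) : dunitary U -> dunitary (dstar U).
Proof. by case=> h1 h2; split; rewrite dstarK. Qed.

Lemma dunitaryKl n p (U : dmx C n n) (Z : dmx C n p) :
  dunitary U -> dmul (dstar U) (dmul U Z) = Z.
Proof. by case=> h1 _; rewrite -dmulA h1 dmul1l. Qed.

Lemma dunitaryKr n p (U : dmx C n n) (Z : dmx C n p) :
  dunitary U -> dmul U (dmul (dstar U) Z) = Z.
Proof. by case=> _ h2; rewrite -dmulA h2 dmul1l. Qed.

Lemma dunitary_conjK m n (U : dmx C m m) (V : dmx C n n) (B : dmx C m n) :
  dunitary U -> dunitary V ->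
  dmul (dmul (dstar U) (dmul (dmul U B) (dstar V))) V = B.
Proof. by move=> hU [hV _]; rewrite !dmulA (dunitaryKl _ hU) hV dmul1r. Qed.

Lemma gmpi_conds_unitary m n (A Ae : dmx C m n) (X : dmx C n m)
    (U : dmx C m m) (V : dmx C n n) :
  dunitary U -> dunitary V -> gmpi_conds A Ae X ->
  gmpi_conds (dmul (dmul U A) (dstar V)) (dmul (dmul U Ae) (dstar V))
             (dmul (dmul V X) (dstar U)).
Proof.
move=> hU hV [c1 c2 c3 c4]; split.
- by rewrite !dmulA (dunitaryKl _ hV) (dunitaryKl _ hU) -c1 !dmulA.
- by rewrite !dmulA (dunitaryKl _ hU) (dunitaryKl _ hV); congr (dmul V _); rewrite -!dmulA c2.
- rewrite !dmulA (dunitaryKl _ hV) -(dmulA A X) -{2}c3.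
  by rewrite !dstarM !dstarK !dmulA.
- rewrite !dmulA (dunitaryKl _ hU) -(dmulA X A) -{2}c4.
  by rewrite !dstarM !dstarK !dmulA.
Qed.

Lemma gmpi_unique_unitary m n (B Be : dmx C m n) (G : dmx C n m)
    (U : dmx C m m) (V : dmx C n n) :
  dunitary U -> dunitary V ->
  (forall Y, gmpi_conds B Be Y -> Y = G) ->
  forall X, gmpi_conds (dmul (dmul U B) (dstar V)) (dmul (dmul U Be) (dstar V)) X ->
  X = dmul (dmul V G) (dstar U).
Proof.
move=> hU hV uniqG X hX.
have := gmpi_conds_unitary (dunitary_star hU) (dunitary_star hV) hX.
rewrite !dstarK !dunitary_conjK // => /uniqG <-.
by rewrite !dmulA (dunitaryKr _ hV) (proj2 hU) dmul1r.
Qed.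

Lemma conj_infinitesimal m n (A : dmx C m n) (U : dmx C m m) (V : dmx C n n) :
  dunitary U -> dunitary V -> A.2 = 0 ->
  (dmul (dmul (dstar U) A) V).2 =
    (dmul (dmul (dstar U) A) V).1 *m (ctr V.1 *m V.2) +
    (ctr U.2 *m U.1) *m (dmul (dmul (dstar U) A) V).1.
Proof.
move=> [_ hU] [_ hV] hA; rewrite /= hA mulmx0 add0r.
have /= uU := congr1 fst hU; have /= vV := congr1 fst hV.
by rewrite !mulmxA -(mulmxA _ V.1) vV mulmx1 -!(mulmxA (ctr U.2)) uU mul1mx addrC.
Qed.

End DualMatrices.

Section ComplexUniqueness.
Variables (C : numClosedFieldType) (m n : nat).
Implicit Types (S D : 'M[C]_(m, n)) (G Y W : 'M[C]_(n, m)).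

Lemma MP_ctr_right S G : is_MP S G -> ctr S = ctr S *m (S *m G).
Proof. by case=> g1 _ g3 _; rewrite -{1}g1 ctrM g3. Qed.

Lemma MP_ctr_left S G : is_MP S G -> ctr S = (G *m S) *m ctr S.
Proof. by case=> g1 _ _ g4; rewrite -{1}g1 -mulmxA ctrM g4. Qed.

(* Uniqueness of the Moore-Penrose inverse: Y = Y S G = G. *)
Lemma penrose_unique S G Y : is_MP S G -> is_MP S Y -> Y = G.
Proof.
move=> SG SY; have [_ g2 _ g4] := SG; have [_ y2 y3 _] := SY.
have YSG : Y = Y *m S *m G.
  rewrite -{1}y2 -mulmxA -{1}y3 ctrM (MP_ctr_right SG) !mulmxA.
  by rewrite -(mulmxA Y (ctr Y) (ctr S)) -ctrM y3 mulmxA y2.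
have GYS : G = Y *m S *m G.
  rewrite -{1}g2 -{1}g4 ctrM (MP_ctr_left SY).
  by rewrite -(mulmxA (Y *m S)) -ctrM g4 -(mulmxA (Y *m S) (G *m S) G) g2.
by rewrite YSG -GYS.
Qed.

(* Writing T = G S W S G, conditions (3) and (4) give
   G S W = W S G = T, so (2) reads W = 2T + G D G; sandwiching by G S and
   S G yields T = 2T + G D G, whence T = - G D G and W = - G D G. *)
Lemma first_order_unique S D G W : is_MP S G ->
  G *m S *m W + (G *m D + W *m S) *m G = W ->
  ctr (S *m W) = S *m W -> ctr (W *m S) = W *m S ->
  W = - (G *m D *m G).
Proof.
move=> SG second third fourth; have [_ g2 _ _] := SG.
set T := G *m S *m W *m S *m G.
have GSW : G *m S *m W = T.
  rewrite -mulmxA -third ctrM (MP_ctr_right SG) !mulmxA.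
  by rewrite -(mulmxA G (ctr W) (ctr S)) -ctrM third /T !mulmxA.
have WSG : W *m S *m G = T.
  rewrite -fourth ctrM (MP_ctr_left SG).
  by rewrite -(mulmxA (G *m S) (ctr S) (ctr W)) -ctrM fourth /T !mulmxA.
have hW : W = T + T + G *m D *m G.
  by rewrite -{1}second mulmxDl GSW WSG [G *m D *m G + T]addrC addrA.
have GSG_r p (X : 'M[C]_(p, n)) : X *m G *m S *m G = X *m G.
  by rewrite -!mulmxA (mulmxA G S G) g2.
have hT : T = T + T + G *m D *m G.
  have GST : G *m S *m T *m S *m G = T by rewrite /T !mulmxA g2 !GSG_r.
  have GSGDG : G *m S *m (G *m D *m G) *m S *m G = G *m D *m G.
    by rewrite !mulmxA g2 GSG_r.
  by rewrite {1}/T {1}hW !(mulmxDl, mulmxDr) GST GSGDG.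
have /eqP : T + G *m D *m G = 0 by apply: (addrI T); rewrite addr0 addrA -hT.
by rewrite addr_eq0 => /eqP TE; rewrite hW TE -addrA addNr addr0.
Qed.

End ComplexUniqueness.

Section DiagonalMatrices.
Variable C : numClosedFieldType.

Definition dg m n (f : nat -> C) : 'M[C]_(m, n) :=
  \matrix_(i < m, j < n) if (i : nat) == j then f i else 0.

Lemma dgM m n p f g :
  dg m n f *m dg n p g = dg m p (fun i => if (i < n)%N then f i * g i else 0).
Proof.
apply/matrixP=> i j; rewrite !mxE; have [i_lt_n | n_le_i] := ltnP i n.
- rewrite (bigD1 (Ordinal i_lt_n)) //= !mxE eqxx big1 ?addr0.
    by case: eqP => _; rewrite ?mulr0.
  move=> k /negPf ki; rewrite !mxE; case: eqP => [ik | _]; last by rewrite mul0r.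
  by move: ki; rewrite -val_eqE /= -ik eqxx.
- rewrite big1; first by case: eqP.
  by move=> k _; rewrite !mxE gtn_eqF ?mul0r // (leq_trans (ltn_ord k) n_le_i).
Qed.

Lemma dgD m n f g : dg m n f + dg m n g = dg m n (fun i => f i + g i).
Proof. by apply/matrixP=> i j; rewrite !mxE; case: eqP; rewrite ?addr0. Qed.

Lemma dgN m n f : - dg m n f = dg m n (fun i => - f i).
Proof. by apply/matrixP=> i j; rewrite !mxE; case: eqP; rewrite ?oppr0. Qed.

Lemma ctr_dg_real m n f : (forall i, f i \is Num.real) -> ctr (dg m n f) = dg n m f.
Proof.
move=> f_real; apply/matrixP=> i j; rewrite !mxE eq_sym.
by case: eqP => [->|_]; rewrite ?conjC0 ?conj_Creal.
Qed.

Lemma eq_dg m n f g :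
  (forall i, (i < m)%N -> (i < n)%N -> f i = g i) -> dg m n f = dg m n g.
Proof. by move=> fg; apply/matrixP=> i j; rewrite !mxE; case: eqP => // ij; rewrite fg // ij. Qed.

Lemma dg_mul_row0 m n p (f : nat -> C) (M : 'M[C]_(n, p)) (i : 'I_m) j :
  f i = 0 -> (dg m n f *m M) i j = 0.
Proof.
by move=> fi; rewrite mxE big1 // => k _; rewrite mxE; case: eqP => _; rewrite ?fi mul0r.
Qed.

Lemma mul_dg_col0 m n p (f : nat -> C) (M : 'M[C]_(p, m)) i (j : 'I_n) :
  f j = 0 -> (M *m dg m n f) i j = 0.
Proof.
by move=> fj; rewrite mxE big1 // => k _; rewrite mxE; case: eqP => [->|_]; rewrite ?fj mulr0.
Qed.

End DiagonalMatrices.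

Section SingularValueMatrices.
Variables (C : numClosedFieldType) (m n r t : nat) (mu : nat -> C * C).
Hypothesis svd : is_svd_data m n r t mu.

Let r_le_t : (r <= t)%N. Proof. by case: svd => /andP[]. Qed.
Let t_le_mn : (t <= minn m n)%N. Proof. by case: svd => /andP[]. Qed.
Let t_le_m : (t <= m)%N. Proof. exact: leq_trans t_le_mn (geq_minl _ _). Qed.
Let t_le_n : (t <= n)%N. Proof. exact: leq_trans t_le_mn (geq_minr _ _). Qed.
Let r_le_m : (r <= m)%N. Proof. exact: leq_trans r_le_t t_le_m. Qed.
Let r_le_n : (r <= n)%N. Proof. exact: leq_trans r_le_t t_le_n. Qed.

Let std_neq0 i : (i < r)%N -> (mu i).1 != 0.
Proof. by case: svd => _ app _ _ _ /app [_ /lt0r_neq0]. Qed.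
Let std_real i : (i < r)%N -> (mu i).1 \is Num.real.
Proof. by case: svd => _ app _ _ _ /app [[]]. Qed.
Let inf_real i : (i < t)%N -> (mu i).2 \is Num.real.
Proof.
case: svd => _ app inf _ _ i_lt_t; have [/app [[]] // | r_le_i] := ltnP i r.
by have [_ []] := inf i r_le_i i_lt_t.
Qed.

Local Definition sigS i := if (i < r)%N then (mu i).1 else 0.
Local Definition sigD i := if (i < t)%N then (mu i).2 else 0.
Local Definition sigDe i := if (i < r)%N then (mu i).2 else 0.
Local Definition sigG i := if (i < r)%N then ((mu i).1)^-1 else 0.
Local Definition sigGD i := if (i < r)%N then - (((mu i).1)^-2 * (mu i).2) else 0.

Local Notation S := (dg m n sigS).
Local Notation D := (dg m n sigD).
Local Notation G := (dg n m sigG).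
Local Notation GD := (dg n m sigGD).

Let ctr_S : ctr S = dg n m sigS.
Proof. by apply: ctr_dg_real => i; rewrite /sigS; case: ifP => // /std_real. Qed.
Let ctr_D : ctr D = dg n m sigD.
Proof. by apply: ctr_dg_real => i; rewrite /sigD; case: ifP => // /inf_real. Qed.
Let ctr_G : ctr G = dg m n sigG.
Proof. by apply: ctr_dg_real => i; rewrite /sigG; case: ifP => // /std_real; rewrite realV. Qed.
Let ctr_GD : ctr GD = dg m n sigGD.
Proof.
apply: ctr_dg_real => i; rewrite /sigGD; case: ifP => // i_lt_r.
by rewrite rpredN rpredM ?rpredV ?rpredX ?std_real ?inf_real // (leq_trans i_lt_r r_le_t).
Qed.

Lemma SigmaE : Sigma m n r t mu = (S, D).
Proof. by congr pair; apply/matrixP=> i j; rewrite !mxE /sigS /sigD; case: eqP. Qed.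
Lemma Sigma_eE : Sigma_e m n r mu = (S, dg m n sigDe).
Proof. by congr pair; apply/matrixP=> i j; rewrite !mxE /sigS /sigDe; case: eqP. Qed.
Lemma SigmaGE : SigmaG m n r mu = (G, GD).
Proof. by congr pair; apply/matrixP=> i j; rewrite !mxE /sigG /sigGD; case: eqP. Qed.

(* Reduce an identity between products of these diagonal matrices to a field
   identity on each index i < r; for i >= r every term vanishes. *)
Local Ltac appreciable_entry i_lt_r :=
  rewrite ?(leq_trans i_lt_r r_le_m) ?(leq_trans i_lt_r r_le_n)
    ?(leq_trans i_lt_r r_le_t) /=;
  by field; exact: (std_neq0 i_lt_r).

Local Ltac vanishing_entry :=
  by rewrite /= ?(mul0r, mulr0, addr0, add0r, oppr0, if_same).

Local Ltac diag_entrywise :=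
  rewrite ?(ctrD, ctrM, ctr_S, ctr_D, ctr_G, ctr_GD) ?(dgM, dgD, dgN);
  let i := fresh "i" in let h := fresh "h" in
  apply: eq_dg => i _ _; rewrite /sigS /sigD /sigDe /sigG /sigGD;
  case: (ltnP i r) => h; [appreciable_entry h | vanishing_entry].

Lemma Sigma_std_MP : is_MP S G.
Proof. by split; diag_entrywise. Qed.

Lemma Sigma_conds : gmpi_conds (Sigma m n r t mu) (Sigma_e m n r mu) (SigmaG m n r mu).
Proof.
rewrite SigmaE Sigma_eE SigmaGE.
by split; rewrite /dmul /dstar /=; congr pair; diag_entrywise.
Qed.

(* Sigma^G is the only solution for Sigma: its standard part is forced by the
   uniqueness of the Moore-Penrose inverse, its infinitesimal part by
   first-order uniqueness. *)
Lemma Sigma_unique (Y : dmx C n m) :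
  gmpi_conds (Sigma m n r t mu) (Sigma_e m n r mu) Y -> Y = SigmaG m n r mu.
Proof.
rewrite SigmaE Sigma_eE SigmaGE.
case: Y => Ys Yd [[c1s _] [c2s c2d] [c3s c3d] [c4s c4d]].
have YsG : Ys = G := penrose_unique Sigma_std_MP (And4 c1s c2s c3s c4s).
subst Ys.
have DG_sa : ctr (D *m G) = D *m G by diag_entrywise.
have GD_sa : ctr (G *m D) = G *m D by diag_entrywise.
rewrite ctrD DG_sa in c3d; rewrite ctrD GD_sa in c4d.
have SYd_sa : ctr (S *m Yd) = S *m Yd by apply: (addIr _ c3d).
have YdS_sa : ctr (Yd *m S) = Yd *m S by apply: (addrI _ c4d).
rewrite (first_order_unique Sigma_std_MP c2d SYd_sa YdS_sa).
by congr pair; diag_entrywise.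
Qed.

(* If A = U Sigma V^* is a complex matrix, Sigma has no infinitesimal singular
   values: the infinitesimal part of Sigma = U^* A V is S P + Q S, whose
   diagonal entries vanish wherever those of S do, while mu_i > 0 for r <= i < t. *)
Lemma Sigma_e_complex (U : dmx C m m) (V : dmx C n n) :
  dunitary U -> dunitary V ->
  (dmul (dmul U (Sigma m n r t mu)) (dstar V)).2 = 0 ->
  Sigma_e m n r mu = Sigma m n r t mu.
Proof.
move=> hU hV /(conj_infinitesimal hU hV); rewrite dunitary_conjK // SigmaE /= => DE.
have t_eq_r i : (i < t)%N = (i < r)%N.
  have [i_lt_r | r_le_i] := ltnP i r; first exact: leq_trans i_lt_r r_le_t.
  apply/negbTE/negP => i_lt_t; case: svd => _ _ /(_ i r_le_i i_lt_t) [_ [_ inf_pos]] _ _.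
  have i_lt_m : (i < m)%N := leq_trans i_lt_t t_le_m.
  have i_lt_n : (i < n)%N := leq_trans i_lt_t t_le_n.
  have sigS_i : sigS i = 0 by rewrite /sigS ltnNge r_le_i.
  move/matrixP/(_ (Ordinal i_lt_m) (Ordinal i_lt_n)): DE.
  rewrite mxE [in RHS]mxE dg_mul_row0 // mul_dg_col0 // addr0 eqxx /sigD /= i_lt_t.
  by move=> inf0; rewrite inf0 ltxx in inf_pos.
by rewrite Sigma_eE; congr pair; apply: eq_dg => i _ _; rewrite /sigDe /sigD t_eq_r.
Qed.

End SingularValueMatrices.

(* For a complex matrix A (A_d = 0) with A_e = A, the unique solution X of the
   four conditions has X_d = 0 and X_s = A_s^+: the standard parts of the
   conditions are the Penrose conditions, and (A_s^+, 0) is itself a solution. *)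
Lemma complex_gmpi (C : numClosedFieldType) m n (A : dmx C m n) (X : dmx C n m) :
  A.2 = 0 -> gmpi_conds A A X -> (forall Y, gmpi_conds A A Y -> Y = X) ->
  X.2 = 0 /\ is_MP A.1 X.1.
Proof.
case: A X => [a ad] [x xd] /= -> [[c1 _] [c2 _] [c3 _] [c4 _]] uniqX.
split; last by split.
have sol0 : gmpi_conds (a, 0) (a, 0) (x, 0).
  by split; rewrite /dmul /dstar /=; congr pair; rewrite ?(mulmx0, mul0mx, addr0, ctr0).
by case: (uniqX _ sol0).
Qed.

Theorem theorem4p1 (C : numClosedFieldType) (m n : nat) (A : dmx C m n)
  (U : dmx C m m) (V : dmx C n n) (r t : nat) (mu : nat -> C * C) :
  is_svd_data m n r t mu ->
  dunitary U -> dunitary V ->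
  A = dmul (dmul U (Sigma m n r t mu)) (dstar V) ->
  [/\ gmpi_conds A (essential U V r mu) (AG U V r mu),
      (forall X : dmx C n m, gmpi_conds A (essential U V r mu) X -> X = AG U V r mu)
    & (A.2 = 0 -> (AG U V r mu).2 = 0 /\ is_MP A.1 (AG U V r mu).1)].
Proof.
move=> svd hU hV ->.
have exists_AG := gmpi_conds_unitary hU hV (Sigma_conds svd).
have unique_AG := gmpi_unique_unitary hU hV (Sigma_unique svd).
split=> // complexA.
rewrite (Sigma_e_complex svd hU hV complexA) in exists_AG unique_AG.
exact: complex_gmpi.
Qed.
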